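(* Let $f:\mathbb{R}\to\mathbb{R}$ be twice continuously differentiable and let $u_L<u_U$ be such that $f$ is strictly convex or strictly concave on $[u_L,u_U]$, i.e. either $f''>0$ on $(u_L,u_U)$ or $f''<0$ on $(u_L,u_U)$. For $u_1\neq u_2$ in $[u_L,u_U]$ let $a(u_1,u_2)$ be the nonlinear average defined below. Then for all $u_1,u_2\in[u_L,u_U]$: (1) $a(u_1,u_2)$ is the same whether computed with $f$ or with $-f$; (2) $a$ is symmetric: $a(u_1,u_2)=a(u_2,u_1)$; (3) $a$ is an average: for $u_1\neq u_2$, $a(u_1,u_2)$ lies strictly between $u_1$ and $u_2$; (4) $a$ is strictly increasing in each of its two arguments; (5) $a$ is continuous at the diagonal, with $a(u_1,u_1)=u_1$, i.e. $a(v_1,v_2)\to u_1$ as $(v_1,v_2)\to(u_1,u_1)$ with $v_1\neq v_2$ in $[u_L,u_U]$.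
   Context: For $g:\mathbb{R}\to\mathbb{R}$ write $[g(u)]_{a}^{b}=g(b)-g(a)$. For $u_1\neq u_2$ (with $f'(u_1)\neq f'(u_2)$, which holds under the convexity/concavity hypothesis) the nonlinear average is $$a(u_1,u_2)=\frac{[f'(u)u-f(u)]_{u_1}^{u_2}}{[f'(u)]_{u_1}^{u_2}}=\frac{\int_{u_1}^{u_2}f''(u)\,u\,\mathrm{d}u}{\int_{u_1}^{u_2}f''(u)\,\mathrm{d}u},$$ and on the diagonal one sets $a(u,u)=u$. The function $f$ is the flux of the scalar conservation law $u_t+(f(u))_x=0$. *)

From Stdlib Require Import Reals Lra.
From Coquelicot Require Import Coquelicot.
Open Scope R_scope.

Definition nl_avg (f : R -> R) (u1 u2 : R) : R :=
  if Req_EM_T u1 u2 then u1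
  else ((Derive f u2 * u2 - f u2) - (Derive f u1 * u1 - f u1))
       / (Derive f u2 - Derive f u1).

(* Writing L(u) = f'(u) u - f(u), one has L' = f'' u and (f')' = f'', so Cauchy's mean value
   theorem gives L(u2) - L(u1) = c (f'(u2) - f'(u1)) for some c strictly between u1 and u2:
   a(u1, u2) is a mean value of u with respect to the positive weight f''.  Since the
   weighted mean over [x, z] is a mediant of the means over [x, y] and [y, z], it moves
   strictly with each endpoint.  The concave case reduces to the convex one by f |-> -f,
   which leaves a unchanged. *)
From Stdlib Require Import Reals Lra.
From Coquelicot Require Import Coquelicot.
Open Scope R_scope.

Definition legendre (f : R -> R) (u : R) : R := Derive f u * u - f u.

Lemma nl_avg_diag f u : nl_avg f u u = u.
Proof. unfold nl_avg; destruct (Req_EM_T u u); [reflexivity | contradiction]. Qed.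

Lemma nl_avg_neq f u1 u2 : u1 <> u2 ->
  nl_avg f u1 u2 = (legendre f u2 - legendre f u1) / (Derive f u2 - Derive f u1).
Proof. intros H; unfold nl_avg, legendre; destruct (Req_EM_T u1 u2); easy. Qed.

Lemma nl_avg_sym f u1 u2 : nl_avg f u1 u2 = nl_avg f u2 u1.
Proof.
  unfold nl_avg; destruct (Req_EM_T u1 u2), (Req_EM_T u2 u1); try lra.
  replace (Derive f u1 - Derive f u2) with (- (Derive f u2 - Derive f u1)) by ring.
  unfold Rdiv; rewrite Rinv_opp; ring.
Qed.

Lemma nl_avg_opp f u1 u2 : nl_avg (fun x => - f x) u1 u2 = nl_avg f u1 u2.
Proof.
  unfold nl_avg; destruct (Req_EM_T u1 u2); [reflexivity |].
  rewrite !Derive_opp.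
  replace (- Derive f u2 - - Derive f u1) with (- (Derive f u2 - Derive f u1)) by ring.
  unfold Rdiv; rewrite Rinv_opp; ring.
Qed.

Lemma cauchy_mvt (g h g' h' : R -> R) (a b : R) : a < b ->
  (forall c, a <= c <= b -> is_derive g c (g' c)) ->
  (forall c, a <= c <= b -> is_derive h c (h' c)) ->
  exists c, a < c < b /\ (g b - g a) * h' c = (h b - h a) * g' c.
Proof.
  intros Hab Hg Hh.
  set (dg := g b - g a); set (dh := h b - h a).
  destruct (MVT_cor2 (fun t => h t * dg - g t * dh) (fun t => h' t * dg - g' t * dh) a b Hab)
    as [c [Hc Hac]].
  - intros c Hc; apply derivable_pt_lim_minus;
      apply derivable_pt_lim_scal_right, is_derive_Reals; auto.
  - exists c; split; [exact Hac |].
    assert (Hk : (h' c * dg - g' c * dh) * (b - a) = 0)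
      by (rewrite <- Hc; unfold dg, dh; ring).
    apply Rmult_integral in Hk as [Hk | Hk]; lra.
Qed.

Lemma mediant_between a1 a2 d1 d2 : a1 < a2 -> 0 < d1 -> 0 < d2 ->
  a1 < (a1 * d1 + a2 * d2) / (d1 + d2) < a2.
Proof.
  intros Ha Hd1 Hd2.
  assert (E : (a1 * d1 + a2 * d2) / (d1 + d2) = a1 + (a2 - a1) * (d2 / (d1 + d2)))
    by (field; lra).
  assert (0 < d2 / (d1 + d2) < 1).
  { split; [apply Rdiv_lt_0_compat; lra |].
    apply Rmult_lt_reg_r with (d1 + d2); [lra |].
    unfold Rdiv; rewrite Rmult_assoc, Rinv_l; lra. }
  rewrite E; split; nra.
Qed.

Section ConvexFlux.

Variable f : R -> R.
Variables a b : R.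
Hypothesis f_derivable : forall x, ex_derive f x.
Hypothesis f'_derivable : forall x, ex_derive (Derive f) x.
Hypothesis f''_pos : forall x, a < x < b -> 0 < Derive (Derive f) x.

Lemma is_derive_Derive x : is_derive (Derive f) x (Derive (Derive f) x).
Proof. apply Derive_correct, f'_derivable. Qed.

Lemma is_derive_legendre x : is_derive (legendre f) x (Derive (Derive f) x * x).
Proof.
  pose proof (Derive_correct f x (f_derivable x)) as Hf.
  pose proof (is_derive_minus _ _ x _ _
    (is_derive_mult _ _ x _ _ (is_derive_Derive x) (is_derive_id x) Rmult_comm) Hf) as H.
  unfold minus, plus, opp, mult in H; simpl in H.
  replace (Derive (Derive f) x * x)
    with (Derive (Derive f) x * x + Derive f x * 1 + - Derive f x) by ring.
  exact H.
Qed.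

Lemma Derive_increasing x y : a <= x -> x < y -> y <= b -> Derive f x < Derive f y.
Proof.
  intros Hx Hxy Hy.
  destruct (cauchy_mvt (fun t => t) (Derive f) (fun _ => 1) (Derive (Derive f)) x y Hxy)
    as [c [Hc E]].
  - intros c _; apply (@is_derive_id R_AbsRing).
  - intros c _; apply is_derive_Derive.
  - pose proof (f''_pos c ltac:(lra)); nra.
Qed.

Lemma legendre_increment x y : a <= x -> x < y -> y <= b ->
  exists c, x < c < y /\
    legendre f y - legendre f x = c * (Derive f y - Derive f x).
Proof.
  intros Hx Hxy Hy.
  destruct (cauchy_mvt (Derive f) (legendre f) (Derive (Derive f))
              (fun t => Derive (Derive f) t * t) x y Hxy) as [c [Hc E]].
  - intros c _; apply is_derive_Derive.
  - intros c _; apply is_derive_legendre.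
  - exists c; split; [exact Hc |].
    pose proof (f''_pos c ltac:(lra)) as Hpos.
    apply Rmult_eq_reg_r with (Derive (Derive f) c); [| lra].
    rewrite <- E; ring.
Qed.

Lemma nl_avg_between x y : a <= x -> x < y -> y <= b -> x < nl_avg f x y < y.
Proof.
  intros Hx Hxy Hy.
  pose proof (Derive_increasing x y Hx Hxy Hy) as Hd.
  destruct (legendre_increment x y Hx Hxy Hy) as [c [Hc E]].
  rewrite nl_avg_neq, E by lra.
  replace (c * (Derive f y - Derive f x) / (Derive f y - Derive f x)) with c
    by (field; lra).
  exact Hc.
Qed.

Lemma nl_avg_mediant x y z : a <= x -> x < y -> y < z -> z <= b ->
  nl_avg f x y < nl_avg f x z < nl_avg f y z.
Proof.
  intros Hx Hxy Hyz Hz.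
  pose proof (nl_avg_between x y Hx Hxy ltac:(lra)) as Bxy.
  pose proof (nl_avg_between y z ltac:(lra) Hyz Hz) as Byz.
  pose proof (Derive_increasing x y Hx Hxy ltac:(lra)) as Dxy.
  pose proof (Derive_increasing y z ltac:(lra) Hyz Hz) as Dyz.
  replace (nl_avg f x z) with
    ((nl_avg f x y * (Derive f y - Derive f x) + nl_avg f y z * (Derive f z - Derive f y))
     / ((Derive f y - Derive f x) + (Derive f z - Derive f y))).
  - apply mediant_between; lra.
  - rewrite !nl_avg_neq by lra; field; lra.
Qed.

Lemma nl_avg_increasing_l u v w : a <= u <= b -> a <= v <= b -> a <= w <= b -> v < w ->
  nl_avg f v u < nl_avg f w u.
Proof.
  intros Hu Hv Hw Hvw.
  destruct (Rlt_or_le u v) as [Huv | Hvu].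
  - rewrite (nl_avg_sym f v u), (nl_avg_sym f w u).
    pose proof (nl_avg_mediant u v w); lra.
  - destruct (Rlt_or_le w u) as [Hwu | Huw].
    + pose proof (nl_avg_mediant v w u); lra.
    + destruct (Req_dec v u) as [-> | Hvu'].
      * rewrite nl_avg_diag, nl_avg_sym; pose proof (nl_avg_between u w); lra.
      * pose proof (nl_avg_between v u); rewrite (nl_avg_sym f w u).
        destruct (Req_dec w u) as [-> | Hwu'].
        -- rewrite nl_avg_diag; lra.
        -- pose proof (nl_avg_between u w); lra.
Qed.

Lemma nl_avg_dist v1 v2 u : a <= v1 <= b -> a <= v2 <= b -> v1 <> v2 ->
  Rabs (nl_avg f v1 v2 - u) < Rmax (Rabs (v1 - u)) (Rabs (v2 - u)).
Proof.
  intros H1 H2 H12.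
  assert (B : Rmin v1 v2 < nl_avg f v1 v2 < Rmax v1 v2).
  { destruct (Rlt_or_le v1 v2) as [L | L].
    - rewrite Rmin_left, Rmax_right by lra; apply nl_avg_between; lra.
    - rewrite Rmin_right, Rmax_left, nl_avg_sym by lra; apply nl_avg_between; lra. }
  revert B; unfold Rmin, Rmax, Rabs.
  repeat (destruct Rle_dec || destruct Rcase_abs); lra.
Qed.

Lemma nl_avg_convex_properties :
  (forall u1 u2, a <= u1 <= b -> a <= u2 <= b -> u1 < u2 ->
     u1 < nl_avg f u1 u2 < u2 /\ u1 < nl_avg f u2 u1 < u2) /\
  (forall u v w, a <= u <= b -> a <= v <= b -> a <= w <= b -> v < w ->
     nl_avg f v u < nl_avg f w u /\ nl_avg f u v < nl_avg f u w) /\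
  (forall u, a <= u <= b ->
     nl_avg f u u = u /\
     forall eps, 0 < eps -> exists delta, 0 < delta /\
       forall v1 v2, a <= v1 <= b -> a <= v2 <= b -> v1 <> v2 ->
         Rabs (v1 - u) < delta -> Rabs (v2 - u) < delta ->
         Rabs (nl_avg f v1 v2 - u) < eps).
Proof.
  split; [| split].
  - intros u1 u2 H1 H2 H12; rewrite (nl_avg_sym f u2 u1).
    split; apply nl_avg_between; lra.
  - intros u v w Hu Hv Hw Hvw; rewrite (nl_avg_sym f u v), (nl_avg_sym f u w).
    split; apply nl_avg_increasing_l; assumption.
  - intros u Hu; split; [apply nl_avg_diag |].
    intros eps Heps; exists eps; split; [exact Heps |].
    intros v1 v2 H1 H2 H12 D1 D2.
    eapply Rlt_trans; [apply nl_avg_dist; assumption | apply Rmax_lub_lt; assumption].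
Qed.

End ConvexFlux.

Theorem lemma1 (f : R -> R) (uL uU : R) :
  (forall x, ex_derive f x) ->
  (forall x, ex_derive (Derive f) x) ->
  (forall x, continuous (Derive (Derive f)) x) ->
  uL < uU ->
  ((forall x, uL < x < uU -> Derive (Derive f) x > 0) \/
   (forall x, uL < x < uU -> Derive (Derive f) x < 0)) ->
  (forall u1 u2, uL <= u1 <= uU -> uL <= u2 <= uU ->
     nl_avg (fun x => - f x) u1 u2 = nl_avg f u1 u2) /\
  (forall u1 u2, uL <= u1 <= uU -> uL <= u2 <= uU ->
     nl_avg f u1 u2 = nl_avg f u2 u1) /\
  (forall u1 u2, uL <= u1 <= uU -> uL <= u2 <= uU -> u1 < u2 ->
     u1 < nl_avg f u1 u2 < u2 /\ u1 < nl_avg f u2 u1 < u2) /\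
  (forall u v w, uL <= u <= uU -> uL <= v <= uU -> uL <= w <= uU -> v < w ->
     nl_avg f v u < nl_avg f w u /\ nl_avg f u v < nl_avg f u w) /\
  (forall u, uL <= u <= uU ->
     nl_avg f u u = u /\
     forall eps, 0 < eps -> exists delta, 0 < delta /\
       forall v1 v2, uL <= v1 <= uU -> uL <= v2 <= uU -> v1 <> v2 ->
         Rabs (v1 - u) < delta -> Rabs (v2 - u) < delta ->
         Rabs (nl_avg f v1 v2 - u) < eps).
Proof.
  intros Hf Hf' _ _ Hsign.
  split; [intros; apply nl_avg_opp |].
  split; [intros; apply nl_avg_sym |].
  destruct Hsign as [Hconvex | Hconcave].
  - apply nl_avg_convex_properties; auto.
  - setoid_rewrite <- (nl_avg_opp f).
    assert (D' : forall x, Derive (fun t => - f t) x = - Derive f x) by apply Derive_opp.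
    apply nl_avg_convex_properties.
    + intros x; auto_derive; apply Hf.
    + intros x; apply (ex_derive_ext (fun t => - Derive f t)); [intros; now rewrite D' |].
      auto_derive; apply Hf'.
    + intros x Hx; rewrite (Derive_ext _ _ x D'), Derive_opp.
      pose proof (Hconcave x Hx); lra.
Qed.
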